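(* Assume the Lipschitz gradient assumption, $r_1>L_x$, $r_2>L_y$, and let $\{(x^t,y^t,z^t,v^t)\}$ be generated by DS-GDA. Then for every $t\ge0$, $$q(z^t)\ge q(z^{t+1})+\frac{r_1}{2}\langle z^t+z^{t+1}-2x(z^t,v(z^{t+1})),z^t-z^{t+1}\rangle.$$
   Context: Let $\mathcal X\subset\mathbb R^n$, $\mathcal Y\subset\mathbb R^d$ be nonempty convex compact sets and $f:\mathbb R^n\times\mathbb R^d\to\mathbb R$ continuously differentiable. Lipschitz gradient assumption: there are $L_x,L_y>0$ such that for all $x,x'\in\mathcal X$, $y,y'\in\mathcal Y$, $\|\nabla_x f(x,y)-\nabla_x f(x',y')\|\le L_x(\|x-x'\|+\|y-y'\|)$ and $\|\nabla_y f(x,y)-\nabla_y f(x',y')\|\le L_y(\|x-x'\|+\|y-y'\|)$. $F(x,y,z,v)=f(x,y)+\frac{r_1}{2}\|x-z\|^2-\frac{r_2}{2}\|y-v\|^2$; $h(x,z,v)=\max_{y\in\mathcal Y}F(x,y,z,v)$; $p(z,v)=\min_{x\in\mathcal X}h(x,z,v)$; $x(z,v)=\arg\min_{x\in\mathcal X}h(x,z,v)$; $q(z)=\max_{v\in\mathbb R^d}p(z,v)$ with $v(z)$ a maximizer (assumed to exist). DS-GDA: given $x^0,y^0,z^0,v^0$, stepsizes $c,\alpha>0$, $\beta,\mu\in(0,1)$, for $t\ge0$: $x^{t+1}=\mathrm{proj}_{\mathcal X}(x^t-c\nabla_xF(x^t,y^t,z^t,v^t))$; $y^{t+1}=\mathrm{proj}_{\mathcal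 Y}(y^t+\alpha\nabla_yF(x^{t+1},y^t,z^t,v^t))$; $z^{t+1}=z^t+\beta(x^{t+1}-z^t)$; $v^{t+1}=v^t+\mu(y^{t+1}-v^t)$. *)

From HB Require Import structures.
From mathcomp Require Import all_boot all_order all_algebra.
From mathcomp Require Import all_classical all_reals all_analysis.
Set Implicit Arguments. Unset Strict Implicit. Unset Printing Implicit Defensive.
Import Order.TTheory GRing.Theory Num.Theory.
Import numFieldNormedType.Exports.
Local Open Scope classical_set_scope.
Local Open Scope ring_scope.

(* Vectors of R^n are row vectors 'rV[R]_n; Euclidean structure defined explicitly
   (the library norm on matrices is the max norm). *)
Section Defs.
Variable R : realType.

Definition dotv (k : nat) (u w : 'rV[R]_k) : R := \sum_(i < k) u 0 i * w 0 i.
Definition sqnorm (k : nat) (u : 'rV[R]_k) : R := dotv u u.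
Definition enorm (k : nat) (u : 'rV[R]_k) : R := Num.sqrt (sqnorm u).

Definition convex_setR (k : nat) (A : set 'rV[R]_k) : Prop :=
  forall a b (l : R), A a -> A b -> 0 <= l -> l <= 1 -> A (l *: a + (1 - l) *: b).

Definition gradx (n d : nat) (g : 'rV[R]_n -> 'rV[R]_d -> R) (x : 'rV[R]_n) (y : 'rV[R]_d)
  : 'rV[R]_n := \row_(i < n) 'D_(delta_mx 0 i) (fun x' => g x' y) x.
Definition grady (n d : nat) (g : 'rV[R]_n -> 'rV[R]_d -> R) (x : 'rV[R]_n) (y : 'rV[R]_d)
  : 'rV[R]_d := \row_(j < d) 'D_(delta_mx 0 j) (fun y' => g x y') y.

Definition C1 (n d : nat) (g : 'rV[R]_n -> 'rV[R]_d -> R) : Prop :=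
  let G := fun p : 'rV[R]_n * 'rV[R]_d => g p.1 p.2 in
  (forall p, differentiable G p) /\ (forall w, continuous (fun p => 'D_w G p)).

Definition is_proj (k : nat) (A : set 'rV[R]_k) (w pr : 'rV[R]_k) : Prop :=
  A pr /\ forall a, A a -> enorm (pr - w) <= enorm (a - w).

Variables (n d : nat) (f : 'rV[R]_n -> 'rV[R]_d -> R) (r1 r2 : R)
  (X : set 'rV[R]_n) (Y : set 'rV[R]_d).

Definition FF (x : 'rV[R]_n) (y : 'rV[R]_d) (z : 'rV[R]_n) (v : 'rV[R]_d) : R :=
  f x y + r1 / 2 * sqnorm (x - z) - r2 / 2 * sqnorm (y - v).

Definition hh (x : 'rV[R]_n) (z : 'rV[R]_n) (v : 'rV[R]_d) : R :=
  sup [set FF x y z v | y in Y].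

Definition pp (z : 'rV[R]_n) (v : 'rV[R]_d) : R :=
  inf [set hh x z v | x in X].

Definition qq (z : 'rV[R]_n) : R := sup (range (pp z)).

End Defs.

From HB Require Import structures.
From mathcomp Require Import all_boot all_order all_algebra.
From mathcomp Require Import all_classical all_reals all_analysis.
From mathcomp Require Import ring lra.
Import Order.TTheory GRing.Theory Num.Theory.
Import numFieldNormedType.Exports.
Local Open Scope classical_set_scope.
Local Open Scope ring_scope.

(* Put v' := v(z^{t+1}) and x' := x(z^t, v').  Then
   q(z^t) >= p(z^t, v') = h(x', z^t, v') and
   q(z^{t+1}) = p(z^{t+1}, v') <= h(x', z^{t+1}, v'),
   and the two values of h differ only through the proximal term, by
   (r1/2) (|x' - z^t|^2 - |x' - z^{t+1}|^2), which is the inner product of the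
   claim. *)

Section SupInfImage.
Context {R : realType} {T : Type}.

Lemma sup_image_attained (A : set T) (g : T -> R) a :
  A a -> (forall b, A b -> g b <= g a) -> sup (g @` A) = g a.
Proof.
move=> Aa gmax; have ub : ubound (g @` A) (g a) by move=> _ [b Ab <-]; exact: gmax.
apply/eqP; rewrite eq_le ge_sup //=; last by exists (g a), a.
by apply: ub_le_sup; [exists (g a) | exists a].
Qed.

Lemma inf_image_attained (A : set T) (g : T -> R) a :
  A a -> (forall b, A b -> g a <= g b) -> inf (g @` A) = g a.
Proof.
move=> Aa gmin; have lb : lbound (g @` A) (g a) by move=> _ [b Ab <-]; exact: gmin.
apply/eqP; rewrite eq_le lb_le_inf ?andbT //=; last by exists (g a), a.
by apply: ge_inf; [exists (g a) | exists a].
Qed.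

Lemma sup_image_addr (A : set T) (g : T -> R) c :
  has_sup (g @` A) -> sup [set g y + c | y in A] = sup (g @` A) + c.
Proof.
move=> supA; have supc : has_sup [set c] by split; [exists c | exists c => _ ->].
rewrite -[c in RHS]sup1 -sup_sumE //; congr sup; apply/seteqP; split.
- by move=> _ [y Ay <-]; exists (g y); [exists y | exists c].
- by move=> _ [_ [y Ay <-] [_ -> <-]]; exists y.
Qed.

End SupInfImage.

Lemma continuous_compact_has_ubound {R : realType} {T : topologicalType}
    {g : T -> R} {A : set T} :
  continuous g -> compact A -> has_ubound (g @` A).
Proof.
move=> cg cA.
have [M [_ HM]] := compact_bounded (continuous_compact (continuous_subspaceT cg) cA).
exists (M + 1) => _ [y Ay <-]; apply: le_trans (ler_norm _) _.
by apply: (HM (M + 1)); [rewrite ltrDl | exists y].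
Qed.

Lemma C1_continuousr {R : realType} {n d} {f : 'rV[R]_n -> 'rV[R]_d -> R} x :
  C1 f -> continuous (f x).
Proof.
move=> [fdiff _] y.
have fcont := differentiable_continuous (fdiff (x, y)).
exact: (@continuous2_cvg _ _ _ _ (nbhs y) _ (fun=> x) id f x y fcont (cvg_cst x) cvg_id).
Qed.

Lemma sqnorm_ge0 {R : realType} {k} (u : 'rV[R]_k) : 0 <= sqnorm u.
Proof. by apply: sumr_ge0 => i _; rewrite -expr2 sqr_ge0. Qed.

Lemma subr_sqnorm {R : realType} {k} (x a b : 'rV[R]_k) :
  sqnorm (x - a) - sqnorm (x - b) = dotv (a + b - 2%:R *: x) (a - b).
Proof. by rewrite /sqnorm /dotv -sumrB; apply: eq_bigr => i _; rewrite !mxE; ring. Qed.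

Section InnerMax.
Context {R : realType} {n d : nat} {f : 'rV[R]_n -> 'rV[R]_d -> R} {r1 r2 : R}
  {Y : set 'rV[R]_d}.
Hypotheses (fC1 : C1 f) (cY : compact Y) (Y0 : Y !=set0) (r2_ge0 : 0 <= r2).

Lemma has_sup_FF x z v : has_sup [set FF f r1 r2 x y z v | y in Y].
Proof.
have [y0 Yy0] := Y0.
split; first by exists (FF f r1 r2 x y0 z v), y0.
have [M fM] := continuous_compact_has_ubound (C1_continuousr x fC1) cY.
exists (M + r1 / 2 * sqnorm (x - z)) => _ [y Yy <-].
have fyM : f x y <= M by apply: fM; exists y.
have : 0 <= r2 / 2 * sqnorm (y - v) by rewrite mulr_ge0 ?divr_ge0 ?sqnorm_ge0.
by rewrite /FF; lra.
Qed.

Lemma hh_shift x z z' v :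
  hh f r1 r2 Y x z v
  = hh f r1 r2 Y x z' v + r1 / 2 * dotv (z + z' - 2%:R *: x) (z - z').
Proof.
rewrite -subr_sqnorm /hh -sup_image_addr; last exact: has_sup_FF.
by congr sup; apply: eq_imagel => y _; rewrite /FF; ring.
Qed.

End InnerMax.

Theorem lemma7 (R : realType) (n d : nat)
  (X : set 'rV[R]_n) (Y : set 'rV[R]_d) (f : 'rV[R]_n -> 'rV[R]_d -> R)
  (Lx Ly r1 r2 c alpha beta mu : R)
  (xf : 'rV[R]_n -> 'rV[R]_d -> 'rV[R]_n) (vf : 'rV[R]_n -> 'rV[R]_d)
  (xs : nat -> 'rV[R]_n) (ys : nat -> 'rV[R]_d)
  (zs : nat -> 'rV[R]_n) (vs : nat -> 'rV[R]_d) :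
  (* X, Y nonempty convex compact *)
  X !=set0 -> convex_setR X -> compact X ->
  Y !=set0 -> convex_setR Y -> compact Y ->
  (* f continuously differentiable *)
  C1 f ->
  (* Lipschitz gradient assumption *)
  0 < Lx -> 0 < Ly ->
  (forall x x' y y', X x -> X x' -> Y y -> Y y' ->
     enorm (gradx f x y - gradx f x' y') <= Lx * (enorm (x - x') + enorm (y - y'))) ->
  (forall x x' y y', X x -> X x' -> Y y -> Y y' ->
     enorm (grady f x y - grady f x' y') <= Ly * (enorm (x - x') + enorm (y - y'))) ->
  Lx < r1 -> Ly < r2 ->
  (* x(z,v) = argmin_{x in X} h(x,z,v) *)
  (forall z v, X (xf z v) /\
     forall x, X x -> hh f r1 r2 Y (xf z v) z v <= hh f r1 r2 Y x z v) ->
  (* v(z) is a maximizer of p(z, .) *)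
  (forall z v, pp f r1 r2 X Y z v <= pp f r1 r2 X Y z (vf z)) ->
  (* DS-GDA stepsizes *)
  0 < c -> 0 < alpha -> 0 < beta < 1 -> 0 < mu < 1 ->
  (* DS-GDA iterations *)
  (forall t, is_proj X
     (xs t - c *: gradx (fun x y => FF f r1 r2 x y (zs t) (vs t)) (xs t) (ys t))
     (xs t.+1)) ->
  (forall t, is_proj Y
     (ys t + alpha *: grady (fun x y => FF f r1 r2 x y (zs t) (vs t)) (xs t.+1) (ys t))
     (ys t.+1)) ->
  (forall t, zs t.+1 = zs t + beta *: (xs t.+1 - zs t)) ->
  (forall t, vs t.+1 = vs t + mu *: (ys t.+1 - vs t)) ->
  forall t : nat,
    qq f r1 r2 X Y (zs t) >=
    qq f r1 r2 X Y (zs t.+1)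
    + r1 / 2 * dotv (zs t + zs t.+1 - 2%:R *: xf (zs t) (vf (zs t.+1))) (zs t - zs t.+1).
Proof.
move=> _ _ _ Y0 _ cY fC1 _ Ly_gt0 _ _ _ Ly_lt_r2 xf_argmin vf_argmax _ _ _ _ _ _ _ _ t.
have r2_ge0 : 0 <= r2 by rewrite ltW // (lt_trans Ly_gt0).
have ppE z v : pp f r1 r2 X Y z v = hh f r1 r2 Y (xf z v) z v.
  by have [Xxf xf_min] := xf_argmin z v; exact: inf_image_attained.
have qqE z : qq f r1 r2 X Y z = pp f r1 r2 X Y z (vf z).
  by apply: sup_image_attained => // v _; exact: vf_argmax.
set v' := vf (zs t.+1); set x' := xf (zs t) v'.
have q0_ge : pp f r1 r2 X Y (zs t) v' <= qq f r1 r2 X Y (zs t).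
  by rewrite qqE vf_argmax.
have q1_le : qq f r1 r2 X Y (zs t.+1) <= hh f r1 r2 Y x' (zs t.+1) v'.
  by rewrite qqE ppE; apply: (xf_argmin _ _).2; exact: (xf_argmin _ _).1.
apply: le_trans q0_ge.
by rewrite ppE (hh_shift fC1 cY Y0 r2_ge0 _ _ (zs t.+1)) lerD2r.
Qed.
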